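(* Let $i\geq 1$. For $n\geq 0$, let $M(i,n)$ be the set of pairs $(L_1,L_2)$ of walks of length $n$ with steps $(1,1)$ and $(1,-1)$, where $L_1$ starts at $(0,0)$ and $L_2$ starts at $(0,2i)$, such that $L_1$ and $L_2$ intersect (share a common lattice point). Let $M_i(t)=\sum_{n\geq0}|M(i,n)|t^n$. Let $C(t)=\sum_{n\geq0}\frac{1}{n+1}\binom{2n}{n}t^n$ and $D(t)=tC^2(t)$. Then $$M_i(t)=\frac{D^i(t)}{1-4t}.$$ *)

From mathcomp Require Import all_boot all_order all_algebra.
Set Implicit Arguments. Unset Strict Implicit. Unset Printing Implicit Defensive.
Import Order.TTheory GRing.Theory Num.Theory.
Local Open Scope ring_scope.

(* A walk of length n with steps (1,1) (true) and (1,-1) (false). *)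
Definition walk (n : nat) := {ffun 'I_n -> bool}.

Definition walk_point (n : nat) (y0 : int) (s : walk n) (k : nat) : int * int :=
  (k%:Z, y0 + \sum_(j < n | (j < k)%N) (if s j then 1 else -1)).

Definition walks_intersect (n : nat) (y1 y2 : int) (L1 L2 : walk n) : bool :=
  [exists k1 : 'I_n.+1, exists k2 : 'I_n.+1,
     walk_point y1 L1 k1 == walk_point y2 L2 k2].

Definition Mset (i n : nat) : {set walk n * walk n} :=
  [set p | walks_intersect 0 (2 * i)%:Z p.1 p.2].

Definition fps := nat -> rat.
Definition fps_mul (f g : fps) : fps :=
  fun n => \sum_(k < n.+1) f k * g (n - k)%N.
Definition fps_one : fps := fun n => if n is 0 then 1 else 0.
Definition fps_pow (f : fps) (i : nat) : fps := iter i (fps_mul f) fps_one.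
Definition fps_shift (f : fps) : fps := fun n => if n is m.+1 then f m else 0.
Definition inv_1m4t : fps := fun n => 4 ^+ n.

Definition Mgf (i : nat) : fps := fun n => (#|Mset i n|)%:R.
Definition Cgf : fps := fun n => ('C(2 * n, n))%:R / (n.+1)%:R.
Definition Dgf : fps := fps_shift (fps_mul Cgf Cgf).

From mathcomp Require Import all_boot all_order all_algebra.
From Stdlib Require Import FunctionalExtensionality.
From mathcomp Require Import zify ring lra.
Set Implicit Arguments. Unset Strict Implicit. Unset Printing Implicit Defensive.
Import Order.TTheory GRing.Theory Num.Theory.
Local Open Scope ring_scope.

(* Two walks can only meet at equal abscissae, and at each step the gap
   between them changes by -2, 0, 0 or +2.  Hence the number N(d, n) of
   meeting pairs of length n with initial gap 2d satisfies N(0, n) = 4^n,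
   N(d+1, 0) = 0 and N(d+1, n+1) = N(d, n) + 2 N(d+1, n) + N(d+2, n).
   Since D = t (1 + D)^2, the coefficients of D^d / (1 - 4t) obey the same
   recurrence.  The Catalan equation C = 1 + t C^2 behind D = t (1 + D)^2 is
   obtained from the ratio C_(n+1) / C_n: the series V = 1 - 2 t C satisfies
   (1 - 4t) V' = -2 V, so (1 - 4t) (V^2)' = -4 V^2 and V^2 = 1 - 4t. *)

Definition fps_trunc (n : nat) (f : fps) : {poly rat} := \poly_(k < n.+1) f k.

Lemma coef_fps_trunc n f m : (m <= n)%N -> (fps_trunc n f)`_m = f m.
Proof. by move=> le_mn; rewrite coef_poly ltnS le_mn. Qed.

Lemma fps_mul_trunc f g n m :
  (m <= n)%N -> fps_mul f g m = (fps_trunc n f * fps_trunc n g)`_m.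
Proof.
move=> le_mn; rewrite coefM; apply: eq_bigr => k _.
have le_kn : (k <= n)%N by apply: leq_trans le_mn; rewrite -ltnS.
by rewrite !coef_fps_trunc // (leq_trans (leq_subr _ _) le_mn).
Qed.

Lemma fps_mulA f g h : fps_mul (fps_mul f g) h = fps_mul f (fps_mul g h).
Proof.
apply: functional_extensionality => n.
transitivity ((fps_trunc n f * fps_trunc n g * fps_trunc n h)`_n).
  rewrite coefM; apply: eq_bigr => k _; have le_kn : (k <= n)%N by rewrite -ltnS.
  by rewrite coef_fps_trunc ?leq_subr // -(fps_mul_trunc f g le_kn).
rewrite -mulrA coefM; apply: eq_bigr => k _; have le_kn : (k <= n)%N by rewrite -ltnS.
by rewrite coef_fps_trunc // -(fps_mul_trunc g h (leq_subr k n)).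
Qed.

Lemma fps_mulC f g : fps_mul f g = fps_mul g f.
Proof.
by apply: functional_extensionality => n; rewrite !(fps_mul_trunc _ _ (leqnn n)) mulrC.
Qed.

Definition fps_add (f g : fps) : fps := fun n => f n + g n.

Lemma fps_mulDl f g h : fps_mul (fps_add f g) h = fps_add (fps_mul f h) (fps_mul g h).
Proof.
apply: functional_extensionality => n.
by rewrite /fps_add /fps_mul -big_split; apply: eq_bigr => k _; rewrite mulrDl.
Qed.

Lemma fps_mulDr f g h : fps_mul f (fps_add g h) = fps_add (fps_mul f g) (fps_mul f h).
Proof. by rewrite fps_mulC fps_mulDl !(fps_mulC f). Qed.

Lemma fps_mul1l f : fps_mul fps_one f = f.
Proof.
apply: functional_extensionality => n.
by rewrite /fps_mul big_ord_recl subn0 mul1r big1 ?addr0 // => k _; rewrite mul0r.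
Qed.

Lemma fps_mul_shiftl f g : fps_mul (fps_shift f) g = fps_shift (fps_mul f g).
Proof.
apply: functional_extensionality => -[|n]; rewrite /fps_mul big_ord_recl mul0r add0r //.
by rewrite big_ord0.
Qed.

Lemma bin_center_succ n : ('C(2 * n.+1, n.+1) * n.+1 = 2 * (2 * n).+1 * 'C(2 * n, n))%N.
Proof.
have diag : (2 * n.+1 * 'C((2 * n).+1, n) = n.+1 * 'C(2 * n.+1, n.+1))%N.
  by rewrite -mul_bin_diag mulnS.
have down : ((2 * n).+1 * 'C(2 * n, n) = n.+1 * 'C((2 * n).+1, n))%N.
  by rewrite (mul_bin_down (2 * n).+1 n); congr (_ * _)%N; lia.
nia.
Qed.

Lemma Cgf_succ_ratio n : (n.+2)%:R * Cgf n.+1 = (4 * n%:R + 2) * Cgf n.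
Proof.
have nz k : (k.+1)%:R != 0 :> rat by rewrite pnatr_eq0.
apply: (mulIf (nz n)); rewrite /Cgf mulrCA divff // mulr1 -mulrA divfK //.
by rewrite -[LHS]natrM bin_center_succ -[(2 * n).+1]addn1 !(natrM, natrD); ring.
Qed.

(* V = 1 - 2 t C; it turns out to be the square root of 1 - 4t. *)
Definition Vgf : fps := fun k => if k is m.+1 then -2 * Cgf m else 1.

Lemma Vgf_succ_ratio k : (k.+1)%:R * Vgf k.+1 = (4 * k%:R - 2) * Vgf k.
Proof.
case: k => [|m].
  by rewrite /Vgf /Cgf muln0 bin0; field.
by rewrite /Vgf mulrCA Cgf_succ_ratio -[m.+1]addn1 natrD; ring.
Qed.

Lemma fps_sqr_weighted (a : fps) n :
  2 * \sum_(k < n.+1) k%:R * a k * a (n - k)%N = n%:R * fps_mul a a n.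
Proof.
have rev_sum : \sum_(k < n.+1) k%:R * a k * a (n - k)%N =
               \sum_(k < n.+1) (n - k)%N%:R * a k * a (n - k)%N.
  rewrite (reindex_inj rev_ord_inj) /=; apply: eq_bigr => k _.
  have le_kn : (k <= n)%N by rewrite -ltnS.
  by rewrite subSS subKn // mulrAC.
rewrite mulr2n mulrDl mul1r {2}rev_sum -big_split /fps_mul mulr_sumr.
apply: eq_bigr => k _ /=; have le_kn : (k <= n)%N by rewrite -ltnS.
by rewrite -!mulrA -mulrDl -natrD subnKC.
Qed.

(* The coefficient form of: (1 - c t) a' = e a implies (1 - c t) (a^2)' = 2 e a^2. *)
Lemma fps_sqr_succ_ratio (a : fps) (c e : rat) :
  (forall k, (k.+1)%:R * a k.+1 = (c * k%:R + e) * a k) ->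
  forall m, (m.+1)%:R * fps_mul a a m.+1 = (c * m%:R + 2 * e) * fps_mul a a m.
Proof.
move=> a_rec m; rewrite -fps_sqr_weighted big_ord_recl /= mulr0n !mul0r add0r.
under eq_bigr => i _ do rewrite /= /bump /= add1n subSS a_rec.
have -> : \sum_(i < m.+1) (c * i%:R + e) * a i * a (m - i)%N =
          c * \sum_(i < m.+1) i%:R * a i * a (m - i)%N + e * fps_mul a a m.
  by rewrite /fps_mul !mulr_sumr -big_split; apply: eq_bigr => i _ /=; ring.
by rewrite mulrDr mulrCA fps_sqr_weighted; ring.
Qed.

Lemma Vgf_sqr_vanish m : fps_mul Vgf Vgf m.+2 = 0.
Proof.
have rec := fps_sqr_succ_ratio Vgf_succ_ratio.
have cancel k (x : rat) : (k.+1)%:R * x = 0 -> x = 0.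
  by move/eqP; rewrite mulf_eq0 pnatr_eq0 => /eqP.
elim: m => [|m IH]; [apply: (cancel 1%N) | apply: (cancel m.+2)]; rewrite rec.
  by rewrite (_ : 4 * 1%:R + 2 * -2 = 0) ?mul0r //; ring.
by rewrite IH mulr0.
Qed.

Lemma Cgf_succ n : Cgf n.+1 = fps_mul Cgf Cgf n.
Proof.
have := Vgf_sqr_vanish n.
rewrite /fps_mul big_ord_recl big_ord_recr /=.
under eq_bigr => i _ do rewrite /bump add0n add1n subSS subSn ?leq_ord //= mulrACA.
by rewrite /bump /= add1n subnn add0n -mulr_sumr [Vgf 0%N]/=; lra.
Qed.

Lemma Cgf_eq1D : Cgf = fps_add fps_one Dgf.
Proof.
apply: functional_extensionality => -[|n]; rewrite /fps_add /Dgf /fps_shift /fps_one.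
  by rewrite /Cgf bin0 addr0 divr1.
by rewrite add0r Cgf_succ.
Qed.

Definition Ggf (d : nat) : fps := fps_mul (fps_pow Dgf d) inv_1m4t.

Lemma Ggf0 n : Ggf 0 n = 4 ^+ n.
Proof. by rewrite /Ggf fps_mul1l. Qed.

Lemma Ggf_succ d : Ggf d.+1 = fps_mul Dgf (Ggf d).
Proof. by rewrite /Ggf /fps_pow iterS fps_mulA. Qed.

Lemma Ggf_succ_coef0 d : Ggf d.+1 0 = 0.
Proof. by rewrite Ggf_succ /fps_mul big_ord_recl big_ord0 mul0r addr0. Qed.

Lemma Ggf_succ_coefS d n : Ggf d.+1 n.+1 = Ggf d n + 2 * Ggf d.+1 n + Ggf d.+2 n.
Proof.
rewrite [in LHS]Ggf_succ {1}/Dgf fps_mul_shiftl fps_mulA Cgf_eq1D.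
rewrite !fps_mulDl !fps_mulDr !fps_mul1l -!Ggf_succ /fps_shift /fps_add; ring.
Qed.

Definition step (b : bool) : int := if b then 1 else -1.

Definition height n (y0 : int) (s : walk n) (k : nat) : int :=
  y0 + \sum_(j < n | (j < k)%N) step (s j).

Definition walks_meet n (y1 y2 : int) (L1 L2 : walk n) : bool :=
  [exists k : 'I_n.+1, height y1 L1 k == height y2 L2 k].

Lemma walks_intersectE n y1 y2 (L1 L2 : walk n) :
  walks_intersect y1 y2 L1 L2 = walks_meet y1 y2 L1 L2.
Proof.
apply/existsP/existsP => [[k1 /existsP [k2 /eqP [eq_k eq_y]]] | [k /eqP eq_y]].
  by exists k1; rewrite /height eq_y eq_k.
by exists k; apply/existsP; exists k; rewrite /walk_point -/(height _ _ _) eq_y.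
Qed.

Definition wcons n (b : bool) (s : walk n) : walk n.+1 :=
  [ffun j => if unlift ord0 j is Some j' then s j' else b].

Definition wbehead n (s : walk n.+1) : walk n := [ffun j => s (lift ord0 j)].

Lemma wcons0 n b (s : walk n) : wcons b s ord0 = b.
Proof. by rewrite ffunE unlift_none. Qed.

Lemma wcons_lift n b (s : walk n) j : wcons b s (lift ord0 j) = s j.
Proof. by rewrite ffunE liftK. Qed.

Lemma height0 n y0 (s : walk n) : height y0 s 0 = y0.
Proof. by rewrite /height big1 ?addr0. Qed.

Lemma height_wcons n y0 b (s : walk n) k :
  height y0 (wcons b s) k.+1 = height (y0 + step b) s k.
Proof.
rewrite /height !(big_mkcond (fun j : 'I__ => (j < _)%N)) big_ord_recl /= wcons0 addrA.
by congr (_ + _); apply: eq_bigr => j _; rewrite /bump /= add1n ltnS wcons_lift.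
Qed.

Lemma walks_meet_wcons n y1 y2 b1 b2 (s1 s2 : walk n) :
  walks_meet y1 y2 (wcons b1 s1) (wcons b2 s2) =
  (y1 == y2) || walks_meet (y1 + step b1) (y2 + step b2) s1 s2.
Proof.
apply/existsP/orP => [[k] | [eq_y | /existsP [k]]].
- case: (unliftP ord0 k) => [k'|] -> meet_k; last by left; rewrite !height0 in meet_k.
  by right; apply/existsP; exists k'; rewrite lift0 !height_wcons in meet_k.
- by exists ord0; rewrite !height0.
- by exists (lift ord0 k); rewrite lift0 !height_wcons.
Qed.

Lemma walks_meet0 y1 y2 (L1 L2 : walk 0) : walks_meet y1 y2 L1 L2 = (y1 == y2).
Proof.
apply/existsP/idP => [[k] | eq_y]; first by rewrite (ord1 k) !height0.
by exists ord0; rewrite !height0.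
Qed.

Lemma walks_meet_refl n y (L1 L2 : walk n) : walks_meet y y L1 L2.
Proof. by apply/existsP; exists ord0; rewrite !height0. Qed.

Lemma sum_walk_succ n (F : walk n.+1 -> rat) :
  \sum_(s : walk n.+1) F s = \sum_(b : bool) \sum_(s : walk n) F (wcons b s).
Proof.
rewrite pair_bigA (reindex (fun p : bool * walk n => wcons p.1 p.2)) //.
exists (fun s : walk n.+1 => (s ord0, wbehead s)) => [[b s] _ | s _] /=.
  by rewrite wcons0; congr pair; apply/ffunP => j; rewrite ffunE wcons_lift.
apply/ffunP => j; rewrite ffunE.
by case: (unliftP ord0 j) => [j'|] ->; rewrite ?ffunE.
Qed.

Lemma card_walk n : #|walk n| = (2 ^ n)%N.
Proof. by rewrite card_ffun card_bool card_ord. Qed.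

Definition meet_count n (y1 y2 : int) : rat :=
  \sum_(L1 : walk n) \sum_(L2 : walk n) (walks_meet y1 y2 L1 L2 : nat)%:R.

Lemma meet_count_refl n y : meet_count n y y = 4 ^+ n.
Proof.
rewrite /meet_count; under eq_bigr => L1 _ do under eq_bigr => L2 _ do rewrite walks_meet_refl.
by rewrite !sumr_const card_walk -mulrnA -expnMn -natrX mulr1n.
Qed.

Lemma meet_count_succ n y1 y2 : y1 != y2 ->
  meet_count n.+1 y1 y2 =
  \sum_(b1 : bool) \sum_(b2 : bool) meet_count n (y1 + step b1) (y2 + step b2).
Proof.
move=> neq_y; rewrite /meet_count sum_walk_succ; apply: eq_bigr => b1 _.
under eq_bigr => s1 _ do rewrite sum_walk_succ.
rewrite exchange_big; apply: eq_bigr => b2 _; apply: eq_bigr => s1 _.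
by apply: eq_bigr => s2 _; rewrite walks_meet_wcons (negbTE neq_y).
Qed.

Lemma meet_count_gap n y1 y2 d :
  y2 = y1 + (2 * d)%N%:Z -> meet_count n y1 y2 = Ggf d n.
Proof.
elim: n y1 y2 d => [|n IH] y1 y2 [|d] gap;
  try by rewrite gap muln0 addr0 meet_count_refl Ggf0.
  rewrite Ggf_succ_coef0 /meet_count big1 // => L1 _; rewrite big1 // => L2 _.
  by rewrite walks_meet0 (_ : y1 == y2 = false) //; apply/eqP; lia.
rewrite meet_count_succ; last by apply/eqP; lia.
rewrite !big_bool /= Ggf_succ_coefS.
rewrite (IH (y1 + 1) (y2 + 1) d.+1) ?(IH (y1 + 1) (y2 - 1) d)
        ?(IH (y1 - 1) (y2 + 1) d.+2) ?(IH (y1 - 1) (y2 - 1) d.+1); try lia.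
by ring.
Qed.

Theorem corollary3p4 (i : nat) (hi : (1 <= i)%N) :
  Mgf i = fps_mul (fps_pow Dgf i) inv_1m4t.
Proof.
apply: functional_extensionality => n.
rewrite -/(Ggf i) -(@meet_count_gap n 0 (2 * i)%:Z) ?add0r //.
rewrite /Mgf /Mset -sum1_card natr_sum big_mkcond /= /meet_count pair_bigA /=.
by apply: eq_bigr => -[L1 L2] _; rewrite inE /= walks_intersectE; case: walks_meet.
Qed.
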